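(* Let $\mathcal{H}_A,\mathcal{H}_B$ be finite-dimensional Hilbert spaces, let $Q_A$ and $Q_B$ be Hermitian operators on $\mathcal{H}_A$ and $\mathcal{H}_B$ respectively, and let $O\neq 0$ be an operator on $\mathcal{H}_A\otimes\mathcal{H}_B$ satisfying $[Q_A\otimes\mathbb{1}+\mathbb{1}\otimes Q_B,\,O]=0$. Then there exists a symmetry-resolved operator Schmidt decomposition $$\frac{O}{\sqrt{\mathrm{Tr}(O^\dagger O)}}=\sum_q\sum_j\lambda_j^{(q)}\,O_{A,j}^{(q)}\otimes O_{B,j}^{(-q)},$$ where $q$ ranges over eigenvalues of the linear map $X\mapsto[Q_A,X]$ on $\mathrm{End}(\mathcal{H}_A)$, $\lambda_j^{(q)}\ge0$, $\mathrm{Tr}\big((O_{A,j}^{(q)})^\dagger O_{A,j'}^{(q')}\big)=\delta_{q,q'}\delta_{j,j'}$, $\mathrm{Tr}\big((O_{B,j}^{(q)})^\dagger O_{B,j'}^{(q')}\big)=\delta_{q,q'}\delta_{j,j'}$, and $[Q_A,O_{A,j}^{(q)}]=q\,O_{A,j}^{(q)}$, $[Q_B,O_{B,j}^{(q)}]=q\,O_{B,j}^{(q)}$. *)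

From mathcomp Require Export all_boot all_order all_algebra.
From mathcomp Require Export mxtens.
Set Implicit Arguments. Unset Strict Implicit. Unset Printing Implicit Defensive.
Import Order.TTheory GRing.Theory Num.Theory.
Local Open Scope ring_scope.

Definition adjmx (C : numClosedFieldType) (m n : nat) (A : 'M[C]_(m, n)) : 'M[C]_(n, m) :=
  (map_mx Num.conj A)^T.

Definition comm_op (C : numClosedFieldType) (n : nat) (X Y : 'M[C]_n) : 'M[C]_n :=
  X *m Y - Y *m X.

Definition hermitian (C : numClosedFieldType) (n : nat) (Q : 'M[C]_n) : Prop :=
  adjmx Q = Q.

Definition ad_eigenvalue (C : numClosedFieldType) (n : nat) (Q : 'M[C]_n) (q : C) : Prop :=
  exists X : 'M[C]_n, X != 0 /\ comm_op Q X = q *: X.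

(* Realignment sends [X *t Y] to [mxtvec X *m (mxtvec Y)^T], so an operator Schmidt
   decomposition of O is a singular value decomposition of R := realign O, with the
   singular vectors read back as operators. Vectorisation turns X |-> [Q, X] into the
   Hermitian matrix ad_mx Q, and the symmetry of O into
   ad_mx QA *m R = R *m (- ad_mx QB)^T. For such an intertwiner the Gram matrix
   R R^* commutes with ad_mx QA, so one unitary P diagonalises both; the transposed
   rows of P R are then orthogonal eigenvectors of - ad_mx QB with the eigenvalues of
   ad_mx QA, and normalising the nonzero ones gives an SVD of R whose left and right
   singular vectors are eigenvectors of ad QA and ad QB with opposite eigenvalues. *)

From HB Require Import structures.
From mathcomp Require Import sesquilinear spectral ring.
Import Order.TTheory GRing.Theory Num.Theory.
Local Open Scope ring_scope.
Set Implicit Arguments. Unset Strict Implicit. Unset Printing Implicit Defensive.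

Section Realignment.
Variable R : comPzRingType.

Lemma sum_mxtens_index (V : nmodType) m n (F : 'I_(m * n) -> V) :
  \sum_k F k = \sum_i \sum_j F (mxtens_index (i, j)).
Proof.
rewrite pair_bigA /= (reindex (@mxtens_index m n)) /=.
  by apply: eq_bigr => -[i j].
by exists (@mxtens_unindex m n) => k _; rewrite ?mxtens_indexK ?mxtens_unindexK.
Qed.

Lemma sumr_delta_l n (i : 'I_n) (F : 'I_n -> R) : \sum_j (i == j)%:R * F j = F i.
Proof.
rewrite (bigD1 i) //= eqxx mul1r big1 ?addr0 // => j.
by rewrite eq_sym => /negbTE ->; rewrite mul0r.
Qed.

Definition mxtvec m n (X : 'M[R]_(m, n)) : 'cV_(m * n) :=
  \col_k X (mxtens_unindex k).1 (mxtens_unindex k).2.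

Definition tvec_mx m n (v : 'cV[R]_(m * n)) : 'M_(m, n) :=
  \matrix_(i, j) v (mxtens_index (i, j)) 0.

Lemma mxtvecE m n (X : 'M[R]_(m, n)) i j : mxtvec X (mxtens_index (i, j)) 0 = X i j.
Proof. by rewrite mxE mxtens_indexK. Qed.

Lemma mxtvecK m n : cancel (@mxtvec m n) (@tvec_mx m n).
Proof. by move=> X; apply/matrixP => i j; rewrite mxE mxtvecE. Qed.

Lemma tvec_mxK m n : cancel (@tvec_mx m n) (@mxtvec m n).
Proof.
move=> v; apply/matrixP => k z; rewrite ord1 {z}.
by case: (mxtens_indexP k) => i j; rewrite mxtvecE mxE.
Qed.

Lemma mxtvec_inj m n : injective (@mxtvec m n).
Proof. exact: can_inj (@mxtvecK m n). Qed.

Fact mxtvec_is_semilinear m n : semilinear (@mxtvec m n).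
Proof. by split=> [c X|X Y]; apply/matrixP => k z; rewrite !mxE. Qed.
HB.instance Definition _ m n :=
  GRing.isSemilinear.Build R 'M[R]_(m, n) 'cV[R]_(m * n) _ (@mxtvec m n)
    (mxtvec_is_semilinear m n).

Lemma mxtvec_mul m n p q (A : 'M[R]_(m, n)) (X : 'M_(n, p)) (B : 'M_(p, q)) :
  mxtvec (A *m X *m B) = (A *t B^T) *m mxtvec X.
Proof.
apply/matrixP => a z; rewrite ord1 {z}; case: (mxtens_indexP a) => i j.
rewrite mxtvecE mxE [RHS]mxE sum_mxtens_index.
under eq_bigr do rewrite mxE mulr_suml.
rewrite exchange_big /=; apply: eq_bigr => l _; apply: eq_bigr => k _.
by rewrite tensmxE mxtvecE !mxE mulrAC.
Qed.

Definition ad_mx n (Q : 'M[R]_n) : 'M_(n * n) := Q *t 1%:M - 1%:M *t Q^T.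

Lemma mxtvec_commutator n (Q X : 'M[R]_n) :
  mxtvec (Q *m X - X *m Q) = ad_mx Q *m mxtvec X.
Proof.
by rewrite -[Q *m X]mulmx1 -[X *m Q]mul1mx mulmxA linearB /= !mxtvec_mul trmx1 mulmxBl.
Qed.

Lemma commutator_tvec_mx_col n k (Q : 'M[R]_n) (U : 'M_(n * n, k)) (q : 'rV_k) i :
  ad_mx Q *m U = U *m diag_mx q ->
  Q *m tvec_mx (col i U) - tvec_mx (col i U) *m Q = q 0 i *: tvec_mx (col i U).
Proof.
move=> eigU; apply: mxtvec_inj; rewrite mxtvec_commutator linearZ /= tvec_mxK.
rewrite [col i U in LHS]colE mulmxA eigU -colE.
by apply/colP => a; rewrite mul_mx_diag !mxE mulrC.
Qed.

Lemma mulmx_diag_sum_outer m n k (U : 'M[R]_(m, k)) (d : 'rV_k) (V : 'M_(k, n)) :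
  U *m diag_mx d *m V = \sum_i d 0 i *: (col i U *m row i V).
Proof.
apply/matrixP => x y; rewrite mul_mx_diag !mxE summxE; apply: eq_bigr => i _.
by rewrite !mxE big_ord1 !mxE mulrAC mulrC.
Qed.

Definition realign m1 n1 m2 n2 (O : 'M[R]_(m1 * n1, m2 * n2)) : 'M_(m1 * m2, n1 * n2) :=
  \matrix_(a, b) O (mxtens_index ((mxtens_unindex a).1, (mxtens_unindex b).1))
                   (mxtens_index ((mxtens_unindex a).2, (mxtens_unindex b).2)).

Lemma realignE m1 n1 m2 n2 (O : 'M[R]_(m1 * n1, m2 * n2)) i i' j j' :
  realign O (mxtens_index (i, i')) (mxtens_index (j, j')) =
  O (mxtens_index (i, j)) (mxtens_index (i', j')).
Proof. by rewrite mxE !mxtens_indexK. Qed.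

Fact realign_is_semilinear m1 n1 m2 n2 : semilinear (@realign m1 n1 m2 n2).
Proof. by split=> [c O|O O']; apply/matrixP => a b; rewrite !mxE. Qed.
HB.instance Definition _ m1 n1 m2 n2 :=
  GRing.isSemilinear.Build R 'M[R]_(m1 * n1, m2 * n2) 'M[R]_(m1 * m2, n1 * n2) _
    (@realign m1 n1 m2 n2) (realign_is_semilinear m1 n1 m2 n2).

Lemma realign_inj m1 n1 m2 n2 : injective (@realign m1 n1 m2 n2).
Proof.
move=> O O' /matrixP eqOO'; apply/matrixP => x y.
case: (mxtens_indexP x) => i j; case: (mxtens_indexP y) => i' j'.
by have := eqOO' (mxtens_index (i, i')) (mxtens_index (j, j')); rewrite !realignE.
Qed.

Lemma realign_tens m1 n1 m2 n2 (X : 'M[R]_(m1, m2)) (Y : 'M[R]_(n1, n2)) :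
  realign (X *t Y) = mxtvec X *m (mxtvec Y)^T.
Proof.
apply/matrixP => a b.
case: (mxtens_indexP a) => i i'; case: (mxtens_indexP b) => j j'.
by rewrite realignE tensmxE mxE big_ord1 !mxE !mxtens_indexK.
Qed.

Lemma mul_tensmx1E m m' n p (A : 'M[R]_(m, m')) (M : 'M_(m' * n, p)) i j y :
  ((A *t 1%:M) *m M) (mxtens_index (i, j)) y =
  \sum_k A i k * M (mxtens_index (k, j)) y.
Proof.
rewrite mxE sum_mxtens_index; apply: eq_bigr => k _.
by under eq_bigr do rewrite tensmxE mxE -mulrA; rewrite -mulr_sumr sumr_delta_l.
Qed.

Lemma mul_tens1mxE m n n' p (B : 'M[R]_(n, n')) (M : 'M_(m * n', p)) i j y :
  ((1%:M *t B) *m M) (mxtens_index (i, j)) y =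
  \sum_l B j l * M (mxtens_index (i, l)) y.
Proof.
rewrite mxE sum_mxtens_index exchange_big /=; apply: eq_bigr => l _.
by under eq_bigr do rewrite tensmxE mxE -mulrA; rewrite sumr_delta_l.
Qed.

Lemma mulmx_tensmx1E m m' n p (M : 'M[R]_(p, m * n)) (A : 'M_(m, m')) x i j :
  (M *m (A *t 1%:M)) x (mxtens_index (i, j)) =
  \sum_k M x (mxtens_index (k, j)) * A k i.
Proof.
rewrite -[M *m _]trmxK mxE trmx_mul trmx_tens trmx1 mul_tensmx1E.
by apply: eq_bigr => k _; rewrite !mxE mulrC.
Qed.

Lemma mulmx_tens1mxE m n n' p (M : 'M[R]_(p, m * n)) (B : 'M_(n, n')) x i j :
  (M *m (1%:M *t B)) x (mxtens_index (i, j)) =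
  \sum_l M x (mxtens_index (i, l)) * B l j.
Proof.
rewrite -[M *m _]trmxK mxE trmx_mul trmx_tens trmx1 mul_tens1mxE.
by apply: eq_bigr => l _; rewrite !mxE mulrC.
Qed.

Section RealignMul.
Variables m1 n1 m2 n2 : nat.

Lemma realign_tensmx1_mul m1' (A : 'M[R]_(m1, m1')) (O : 'M_(m1' * n1, m2 * n2)) :
  realign ((A *t 1%:M) *m O) = (A *t 1%:M) *m realign O.
Proof.
apply/matrixP => a b.
case: (mxtens_indexP a) => i i'; case: (mxtens_indexP b) => j j'.
rewrite realignE !mul_tensmx1E; apply: eq_bigr => k _; by rewrite realignE.
Qed.

Lemma realign_tens1mx_mul n1' (B : 'M[R]_(n1, n1')) (O : 'M_(m1 * n1', m2 * n2)) :
  realign ((1%:M *t B) *m O) = realign O *m (B^T *t 1%:M).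
Proof.
apply/matrixP => a b.
case: (mxtens_indexP a) => i i'; case: (mxtens_indexP b) => j j'.
rewrite realignE mul_tens1mxE mulmx_tensmx1E; apply: eq_bigr => l _.
by rewrite realignE mxE mulrC.
Qed.

Lemma realign_mul_tensmx1 m2' (O : 'M[R]_(m1 * n1, m2' * n2)) (A : 'M_(m2', m2)) :
  realign (O *m (A *t 1%:M)) = (1%:M *t A^T) *m realign O.
Proof.
apply/matrixP => a b.
case: (mxtens_indexP a) => i i'; case: (mxtens_indexP b) => j j'.
rewrite realignE mulmx_tensmx1E mul_tens1mxE; apply: eq_bigr => k _.
by rewrite realignE mxE mulrC.
Qed.

Lemma realign_mul_tens1mx n2' (O : 'M[R]_(m1 * n1, m2 * n2')) (B : 'M_(n2', n2)) :
  realign (O *m (1%:M *t B)) = realign O *m (1%:M *t B).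
Proof.
apply/matrixP => a b.
case: (mxtens_indexP a) => i i'; case: (mxtens_indexP b) => j j'.
rewrite realignE !mulmx_tens1mxE; apply: eq_bigr => l _; by rewrite realignE.
Qed.

End RealignMul.

Lemma realign_commutator m n (A : 'M[R]_m) (B : 'M[R]_n) (O : 'M_(m * n)) :
  let K := A *t 1%:M + 1%:M *t B in
  realign (K *m O - O *m K) = ad_mx A *m realign O + realign O *m (ad_mx B)^T.
Proof.
rewrite /= mulmxDl mulmxDr !linearB !linearD /=.
rewrite realign_tensmx1_mul realign_tens1mx_mul realign_mul_tensmx1 realign_mul_tens1mx.
by rewrite /ad_mx !trmx_tens trmx1 trmxK mulmxBl addrACA.
Qed.

End Realignment.

Section Adjoint.
Variable C : numClosedFieldType.

Lemma adjmxE m n (A : 'M[C]_(m, n)) : adjmx A = (A ^t* )%sesqui.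
Proof. by rewrite /adjmx map_trmx. Qed.

Lemma adjmxK m n (A : 'M[C]_(m, n)) : adjmx (adjmx A) = A.
Proof. by apply/matrixP => i j; rewrite !mxE conjCK. Qed.

Lemma adjmxM m n p (A : 'M[C]_(m, n)) (B : 'M_(n, p)) :
  adjmx (A *m B) = adjmx B *m adjmx A.
Proof. by rewrite /adjmx map_mxM trmx_mul. Qed.

Lemma adjmxB m n (A B : 'M[C]_(m, n)) : adjmx (A - B) = adjmx A - adjmx B.
Proof. by apply/matrixP => i j; rewrite !mxE rmorphB. Qed.

Lemma adjmxN m n (A : 'M[C]_(m, n)) : adjmx (- A) = - adjmx A.
Proof. by apply/matrixP => i j; rewrite !mxE rmorphN. Qed.

Lemma adjmx_trmx m n (A : 'M[C]_(m, n)) : adjmx A^T = (adjmx A)^T.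
Proof. by apply/matrixP => i j; rewrite !mxE. Qed.

Lemma adjmx_tens m n p q (A : 'M[C]_(m, n)) (B : 'M[C]_(p, q)) :
  adjmx (A *t B) = adjmx A *t adjmx B.
Proof. by rewrite /adjmx map_mxT trmx_tens. Qed.

Lemma adjmx1 n : adjmx (1%:M : 'M[C]_n) = 1%:M.
Proof. by rewrite /adjmx map_mx1 trmx1. Qed.

Lemma hermitian_ad_mx n (Q : 'M[C]_n) : hermitian Q -> hermitian (ad_mx Q).
Proof.
by rewrite /hermitian /ad_mx => hQ; rewrite adjmxB !adjmx_tens adjmx1 adjmx_trmx hQ.
Qed.

Lemma hermitian_trig_diag n (D : 'M[C]_n) :
  hermitian D -> is_trig_mx D -> is_diag_mx D.
Proof.
move=> hD /is_trig_mxP trigD; apply/is_diag_mxP => i j.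
case: (ltngtP i j) => [ij|ji|//] _; first by rewrite trigD.
by rewrite -hD !mxE trigD ?conjC0.
Qed.

Lemma hermitian_codiagonalization n (A B : 'M[C]_n) :
  hermitian A -> hermitian B -> A *m B = B *m A ->
  exists P : 'M[C]_n, [/\ P *m adjmx P = 1%:M, adjmx P *m P = 1%:M,
    is_diag_mx (P *m A *m adjmx P) & is_diag_mx (P *m B *m adjmx P)].
Proof.
move=> hA hB commAB; have [P unitP /andP[trigA trigB]] := cotrigonalization2 commAB.
have PPt : P *m adjmx P = 1%:M by rewrite adjmxE; apply/unitarymxP.
have PtP : adjmx P *m P = 1%:M.
  by rewrite adjmxE -[LHS]mul1mx mulmxA mulmxKtV.
have hermitian_conj (X : 'M_n) : hermitian X -> hermitian (P *m X *m adjmx P).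
  by rewrite /hermitian => hX; rewrite !adjmxM adjmxK hX mulmxA.
move: trigA trigB; rewrite /similar_to !conjymx // -!adjmxE => trigA trigB.
by exists P; split=> //; apply: hermitian_trig_diag => //; exact: hermitian_conj.
Qed.

Lemma mul_adjmx_diagE m n (A : 'M[C]_(m, n)) i :
  (A *m adjmx A) i i = \sum_j A i j * (A i j)^*.
Proof. by rewrite mxE; apply: eq_bigr => j _; rewrite !mxE. Qed.

Lemma mul_adjmx_diag_ge0 m n (A : 'M[C]_(m, n)) i : 0 <= (A *m adjmx A) i i.
Proof. by rewrite mul_adjmx_diagE sumr_ge0 // => j _; exact: mul_conjC_ge0. Qed.

Lemma mul_adjmx_diag_eq0 m n (A : 'M[C]_(m, n)) i :
  (A *m adjmx A) i i = 0 -> row i A = 0.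
Proof.
rewrite mul_adjmx_diagE => /psumr_eq0P Ai0; apply/rowP => j; rewrite !mxE.
by apply/eqP; rewrite -mul_conjC_eq0 Ai0 // => k _; exact: mul_conjC_ge0.
Qed.

Lemma mxtrace_adjmx_mul_ge0 m n (A : 'M[C]_(m, n)) : 0 <= \tr (adjmx A *m A).
Proof.
rewrite -[A in _ *m A]adjmxK.
by rewrite /mxtrace sumr_ge0 // => i _; exact: mul_adjmx_diag_ge0.
Qed.

Lemma mxtrace_adjmx_mul_mxtvec m n (X Y : 'M[C]_(m, n)) :
  \tr (adjmx X *m Y) = (adjmx (mxtvec X) *m mxtvec Y) 0 0.
Proof.
rewrite mxE sum_mxtens_index /mxtrace exchange_big /=; apply: eq_bigr => j _.
by rewrite mxE; apply: eq_bigr => i _; rewrite !mxE !mxtens_indexK.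
Qed.

Lemma tvec_mx_col_orthonormal m n k (U : 'M[C]_(m * n, k)) i j :
  adjmx U *m U = 1%:M ->
  \tr (adjmx (tvec_mx (col i U)) *m tvec_mx (col j U)) = (i == j)%:R.
Proof.
move=> isoU; rewrite mxtrace_adjmx_mul_mxtvec !tvec_mxK.
transitivity ((adjmx U *m U) i j); last by rewrite isoU mxE.
by rewrite !mxE; apply: eq_bigr => a _; rewrite !mxE.
Qed.

Lemma tvec_mx_col_neq0 m n k (U : 'M[C]_(m * n, k)) i :
  adjmx U *m U = 1%:M -> tvec_mx (col i U) != 0.
Proof.
move=> isoU; apply/eqP => U0; have := tvec_mx_col_orthonormal i i isoU.
by rewrite U0 eqxx mulmx0 mxtrace0 => /eqP; rewrite eq_sym oner_eq0.
Qed.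

End Adjoint.

Section SVD.
Variable C : numClosedFieldType.

Lemma intertwiner_gram_commute p r (R : 'M[C]_(p, r)) (LA : 'M_p) (LB : 'M_r) :
  hermitian LA -> hermitian LB -> LA *m R = R *m LB^T ->
  R *m adjmx R *m LA = LA *m (R *m adjmx R).
Proof.
move=> hLA hLB intR; have adjR_LA : adjmx R *m LA = LB^T *m adjmx R.
  by rewrite -{1}hLA -adjmxM intR adjmxM adjmx_trmx hLB.
by rewrite -mulmxA adjR_LA mulmxA -intR mulmxA.
Qed.

Section SupportOfGram.
Variables (p r : nat) (P : 'M[C]_p) (W : 'M[C]_(p, r)) (dh : 'rV[C]_p).
Hypothesis gramW : W *m adjmx W = diag_mx dh.

Let S := [pred a | dh 0 a != 0].
Let e (i : 'I_#|S|) := enum_val i.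
Let s := \row_i sqrtC (dh 0 (e i)).
Let V := \matrix_(b, i) ((s 0 i)^-1 * W (e i) b).

Let e_inj : injective e. Proof. exact: enum_val_inj. Qed.

Let dh_ge0 a : 0 <= dh 0 a.
Proof. by have := mul_adjmx_diag_ge0 W a; rewrite gramW mxE eqxx mulr1n. Qed.

Let dh_neq0 i : dh 0 (e i) != 0. Proof. exact: enum_valP i. Qed.

Let s_neq0 i : sqrtC (dh 0 (e i)) != 0. Proof. by rewrite sqrtC_eq0 dh_neq0. Qed.

Lemma gram_support_sqrt_ge0 i : 0 <= s 0 i.
Proof. by rewrite mxE sqrtC_ge0 dh_ge0. Qed.

Lemma gram_support_factor :
  adjmx P *m W = colsub e (adjmx P) *m diag_mx s *m V^T.
Proof.
apply/matrixP => x y; rewrite mul_mx_diag !mxE.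
rewrite (bigID S) /= [X in _ + X]big1 ?addr0 => [|a].
  rewrite -[LHS]/(\sum_(a in S) adjmx P x a * W a y) big_enum_val.
  by apply: eq_bigr => i _; rewrite !mxE mulrA mulfK ?s_neq0.
rewrite negbK => /eqP dh0; have /rowP/(_ y) : row a W = 0.
  by apply: mul_adjmx_diag_eq0; rewrite gramW mxE eqxx dh0.
by rewrite !mxE => ->; rewrite mulr0.
Qed.

Lemma gram_support_isometry :
  P *m adjmx P = 1%:M -> adjmx (colsub e (adjmx P)) *m colsub e (adjmx P) = 1%:M.
Proof.
move=> PPt; apply/matrixP => i j; transitivity ((P *m adjmx P) (e i) (e j)).
  by rewrite !mxE; apply: eq_bigr => a _; rewrite !mxE conjCK.
by rewrite PPt !mxE (inj_eq e_inj).
Qed.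

Lemma gram_support_eigen LA (dl : 'rV_p) :
  LA *m adjmx P = adjmx P *m diag_mx dl ->
  LA *m colsub e (adjmx P) = colsub e (adjmx P) *m diag_mx (\row_i dl 0 (e i)).
Proof.
move=> LA_Pt.
by rewrite mulmx_colsub LA_Pt !mul_mx_diag; apply/matrixP => a i; rewrite !mxE.
Qed.

Lemma normalized_rows_isometry : adjmx V *m V = 1%:M.
Proof.
apply/matrixP => i j.
transitivity ((sqrtC (dh 0 (e i)))^-1 * (sqrtC (dh 0 (e j)))^-1 *
              (W *m adjmx W) (e j) (e i)).
  rewrite mxE [(W *m _) _ _]mxE mulr_sumr; apply: eq_bigr => b _.
  by rewrite !mxE rmorphM /= geC0_conj ?invr_ge0 ?sqrtC_ge0 ?dh_ge0 //; ring.
rewrite gramW !mxE (inj_eq e_inj); have [<-|neq_ij] := eqVneq i j.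
  by rewrite mulr1n -invfM -expr2 sqrtCK mulVf ?dh_neq0.
by rewrite mulr0n mulr0.
Qed.

Lemma normalized_rows_eigen LB (dl : 'rV_p) :
  diag_mx dl *m W = W *m LB^T -> LB *m V = V *m diag_mx (\row_i dl 0 (e i)).
Proof.
move=> dlW; apply/matrixP => b i; rewrite mul_mx_diag !mxE.
have /matrixP/(_ (e i) b) := dlW; rewrite mul_diag_mx !mxE => dlW_ib.
rewrite mulrAC -mulrA dlW_ib mulr_sumr; apply: eq_bigr => j _.
by rewrite !mxE mulrCA [W _ _ * _]mulrC.
Qed.

End SupportOfGram.

Lemma intertwiner_svd p r (R : 'M[C]_(p, r)) (LA : 'M_p) (LB : 'M_r) :
  hermitian LA -> hermitian LB -> LA *m R = R *m LB^T ->
  exists k (U : 'M[C]_(p, k)) (V : 'M[C]_(r, k)) (s q : 'rV[C]_k),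
  R = U *m diag_mx s *m V^T /\
  [/\ adjmx U *m U = 1%:M, adjmx V *m V = 1%:M, forall i, 0 <= s 0 i,
      LA *m U = U *m diag_mx q & LB *m V = V *m diag_mx q].
Proof.
move=> hLA hLB intR.
have hgram : hermitian (R *m adjmx R) by rewrite /hermitian adjmxM adjmxK.
have [P [PPt PtP /diag_mxP[dh gramW] /diag_mxP[dl DlE]]] :=
  hermitian_codiagonalization hgram hLA (intertwiner_gram_commute hLA hLB intR).
have RE : R = adjmx P *m (P *m R) by rewrite mulmxA PtP mul1mx.
rewrite -!mulmxA -adjmxM mulmxA in gramW.
have LA_Pt : LA *m adjmx P = adjmx P *m diag_mx dl by rewrite -DlE !mulmxA PtP mul1mx.
have dlW : diag_mx dl *m (P *m R) = P *m R *m LB^T.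
  by rewrite -DlE -!mulmxA (mulmxA (adjmx P)) PtP mul1mx intR.
(* The witnesses are the ones built in SupportOfGram, found by unification. *)
eexists _, _, _, _, _; split; first by rewrite {1}RE; exact: gram_support_factor gramW.
split.
- exact: gram_support_isometry.
- exact: normalized_rows_isometry.
- exact: gram_support_sqrt_ge0 gramW.
- exact: gram_support_eigen LA_Pt.
- exact: normalized_rows_eigen dlW.
Qed.

End SVD.

Theorem proposition4 (C : numClosedFieldType) (m n : nat)
  (QA : 'M[C]_m) (QB : 'M[C]_n) (O : 'M[C]_(m * n))
  (hQA : hermitian QA) (hQB : hermitian QB) (hO : O != 0)
  (hcomm : comm_op (QA *t (1%:M : 'M[C]_n) + (1%:M : 'M[C]_m) *t QB) O = 0) :
  exists (k : nat) (q lam : 'I_k -> C)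
         (OA : 'I_k -> 'M[C]_m) (OB : 'I_k -> 'M[C]_n),
    (forall i, ad_eigenvalue QA (q i)) /\
        (forall i, 0 <= lam i) /\
        (forall i i', \tr (adjmx (OA i) *m OA i') = (i == i')%:R) /\
        (forall i i', \tr (adjmx (OB i) *m OB i') = (i == i')%:R) /\
        (forall i, comm_op QA (OA i) = q i *: OA i) /\
        (forall i, comm_op QB (OB i) = - q i *: OB i) /\
        (sqrtC (\tr (adjmx O *m O)))^-1 *: O
          = \sum_(i < k) lam i *: (OA i *t OB i).
Proof.
have intertwines : ad_mx QA *m realign O = realign O *m (- ad_mx QB)^T.
  have := realign_commutator QA QB O; rewrite /= -/(comm_op _ O) hcomm linear0.
  by move/eqP; rewrite eq_sym addr_eq0 => /eqP ->; rewrite linearN mulmxN.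
have hermN : hermitian (- ad_mx QB) by rewrite /hermitian adjmxN hermitian_ad_mx.
have [k [U [V [s [q [RE [isoU isoV s_ge0 eigU eigV]]]]]]] :=
  intertwiner_svd (hermitian_ad_mx hQA) hermN intertwines.
have eigV' : ad_mx QB *m V = V *m diag_mx (- q).
  by rewrite linearN mulmxN -eigV mulNmx opprK.
set c := (sqrtC _)^-1.
exists k, (fun i => q 0 i), (fun i => c * s 0 i),
  (fun i => tvec_mx (col i U)), (fun i => tvec_mx (col i V)).
have eigA i : comm_op QA (tvec_mx (col i U)) = q 0 i *: tvec_mx (col i U).
  exact: commutator_tvec_mx_col eigU.
split; first by move=> i; exists (tvec_mx (col i U)); split; [exact: tvec_mx_col_neq0|].
split; first by move=> i; rewrite mulr_ge0 // invr_ge0 sqrtC_ge0 mxtrace_adjmx_mul_ge0.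
split; first by move=> i j; exact: tvec_mx_col_orthonormal.
split; first by move=> i j; exact: tvec_mx_col_orthonormal.
split; first exact: eigA.
split; first by move=> i; rewrite /comm_op (commutator_tvec_mx_col _ eigV') mxE.
apply: realign_inj; rewrite linearZ linear_sum /= RE mulmx_diag_sum_outer scaler_sumr.
apply: eq_bigr => i _.
by rewrite [RHS]linearZ /= realign_tens !tvec_mxK tr_col scalerA [c * _]mulrC.
Qed.
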